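(* Let $G=(V,E)$ be a simple undirected graph with $n=|V|$, let $0\le\epsilon\le1$, let $X\subseteq V$, and let $t=|T_\epsilon(X)|$ (assume $t>0$). Then $T_\epsilon(X)$ is an $\frac{n\epsilon}{t}$-near clique.
   Context: $\Gamma(v)$ denotes the set of neighbors of $v$. For $Y\subseteq V$ and $0\le\eta\le1$: $K_\eta(Y)=\{v\in V: |\Gamma(v)\cap Y|\ge(1-\eta)|Y|\}$, and $T_\epsilon(X)=K_\epsilon(K_{2\epsilon^2}(X))\cap K_{2\epsilon^2}(X)$. Each undirected edge $\{u,v\}$ is counted as two directed edges; for $\gamma\ge0$, a set $D\subseteq V$ is a $\gamma$-near clique if $|\{(u,v)\in D\times D:\{u,v\}\in E\}|\ge(1-\gamma)|D|(|D|-1)$. *)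

From mathcomp Require Import all_boot all_order all_algebra.
Set Implicit Arguments. Unset Strict Implicit. Unset Printing Implicit Defensive.
Import Order.TTheory GRing.Theory Num.Theory.
Local Open Scope ring_scope.

(* A simple undirected graph on a finite vertex type V is given by a
   symmetric irreflexive relation e : rel V (checked as hypotheses). *)

Definition nbhd (V : finType) (e : rel V) (v : V) : {set V} := [set u | e v u].

Definition Kset (R : realFieldType) (V : finType) (e : rel V) (eta : R)
  (Y : {set V}) : {set V} :=
  [set v | (1 - eta) * (#|Y|%:R) <= (#|nbhd e v :&: Y|)%:R].

Definition Tset (R : realFieldType) (V : finType) (e : rel V) (eps : R)
  (X : {set V}) : {set V} :=
  Kset e eps (Kset e (2 * eps ^+ 2) X) :&: Kset e (2 * eps ^+ 2) X.

Definition near_clique (R : realFieldType) (V : finType) (e : rel V) (gamma : R)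
  (D : {set V}) : Prop :=
  (1 - gamma) * (#|D|%:R * (#|D|%:R - 1))
    <= (#|[set p : V * V | (p.1 \in D) && (p.2 \in D) && e p.1 p.2]|)%:R.

(* A vertex v of T = T_eps(X) lies in K_eps(K) with K = K_{2 eps^2}(X) and
   T a subset of K, so at most eps |K| <= eps n of the vertices of K are
   missed by the neighbourhood of v and at most |K| - |T| of them lie outside
   T; hence v has at least t - eps n neighbours inside T.  Summing this
   minimum-degree bound over T gives at least t (t - eps n) >= (t - eps n)(t - 1)
   ordered edges, which is the near-clique bound for gamma = n eps / t. *)

From mathcomp Require Import all_boot all_order all_algebra.
From mathcomp Require Import ring lra.

Set Implicit Arguments.
Unset Strict Implicit.
Unset Printing Implicit Defensive.
Import Order.TTheory GRing.Theory Num.Theory.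
Local Open Scope ring_scope.

Lemma card_edge_pairs (V : finType) (e : rel V) (D : {set V}) :
  #|[set p : V * V | (p.1 \in D) && (p.2 \in D) && e p.1 p.2]|
  = (\sum_(v in D) #|nbhd e v :&: D|)%N.
Proof.
rewrite -sum1_card.
under [RHS]eq_bigr => v _ do rewrite -sum1_card.
rewrite pair_big_dep /=; apply: eq_bigl => -[u w] /=.
by rewrite !inE; case: (u \in D); case: (w \in D); case: (e u w).
Qed.

Lemma leq_card_setI_subset (T : finType) (A B C : {set T}) :
  B \subset C -> (#|A :&: C| <= #|A :&: B| + (#|C| - #|B|))%N.
Proof.
move=> sBC; rewrite -(setIidPr sBC) -cardsD (setIidPr sBC).
apply: leq_trans (leq_card_setU _ _); apply: subset_leq_card.
apply/subsetP => u /setIP[Au Cu]; rewrite !inE Au Cu andbT /=.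
by case: (u \in B).
Qed.

Section NearClique.

Variables (R : realFieldType) (V : finType) (e : rel V).

Lemma Kset_nbhd_subset (eta : R) (C D : {set V}) (v : V) :
  v \in Kset e eta C -> D \subset C ->
  #|D|%:R - eta * #|C|%:R <= (#|nbhd e v :&: D|)%:R :> R.
Proof.
rewrite inE => vK sDC.
have le_DC : (#|D| <= #|C|)%N := subset_leq_card sDC.
have : (#|nbhd e v :&: C|%:R : R) <= #|nbhd e v :&: D|%:R + #|C|%:R - #|D|%:R.
  rewrite -natrD -natrB; last exact: leq_trans le_DC (leq_addl _ _).
  by rewrite ler_nat -addnBA // leq_card_setI_subset.
lra.
Qed.

Lemma Tset_subset_Kset (eps : R) (X : {set V}) :
  Tset e eps X \subset Kset e (2 * eps ^+ 2) X.
Proof. exact: subsetIr. Qed.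

Lemma Tset_min_degree (eps : R) (X : {set V}) (v : V) :
  0 <= eps -> v \in Tset e eps X ->
  #|Tset e eps X|%:R - #|V|%:R * eps <= (#|nbhd e v :&: Tset e eps X|)%:R :> R.
Proof.
move=> eps_ge0 /setIP[vK _].
apply: le_trans _ (Kset_nbhd_subset vK (Tset_subset_Kset eps X)).
by rewrite lerD2l lerN2 [_ * eps]mulrC ler_wpM2l // ler_nat max_card.
Qed.

(* The bound needs no assumption on the sign of c: when c > |D| the
   near-clique inequality is trivial because its left-hand side is <= 0. *)
Lemma near_clique_min_degree (c : R) (D : {set V}) :
  (0 < #|D|)%N ->
  (forall v, v \in D -> #|D|%:R - c <= (#|nbhd e v :&: D|)%:R) ->
  near_clique e (c / #|D|%:R) D.
Proof.
move=> D_gt0 min_deg; rewrite /near_clique card_edge_pairs natr_sum.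
set t : R := #|D|%:R; have t_ge1 : 1 <= t by rewrite ler1n.
have edges_ge : t * (t - c) <= \sum_(v in D) (#|nbhd e v :&: D|)%:R.
  by apply: le_trans (ler_sum _ min_deg); rewrite sumr_const mulr_natl.
have -> : (1 - c / t) * (t * (t - 1)) = (t - c) * (t - 1) by field; lra.
have edges_ge0 : 0 <= \sum_(v in D) (#|nbhd e v :&: D|%:R : R).
  by apply: sumr_ge0 => v _.
case: (lerP c t) => ct; [apply: le_trans edges_ge | apply: le_trans edges_ge0];
  nra.
Qed.

End NearClique.

Theorem lemma5p3 (R : realFieldType) (V : finType) (e : rel V)
  (e_sym : symmetric e) (e_irr : irreflexive e)
  (eps : R) (X : {set V}) :
  0 <= eps -> eps <= 1 ->
  (0 < #|Tset e eps X|)%N ->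
  near_clique e (#|V|%:R * eps / (#|Tset e eps X|)%:R) (Tset e eps X).
Proof.
move=> eps_ge0 _ T_gt0.
apply: near_clique_min_degree => // v vT.
exact: Tset_min_degree.
Qed.
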